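(* For a positive integer $h$ and a prime $p$, let $m_p(h)$ denote the exponent of $p$ in $h$ (so $p^{m_p(h)}\mid h$, $p^{m_p(h)+1}\nmid h$). Define $$W_2(h)=\begin{cases}\tfrac14, & m_2(h)=0,\\[2pt] \dfrac{2^{m_2(h)+1}-3}{2^{m_2(h)+2}}, & m_2(h)\ge 1,\end{cases}\qquad \mathscr{T}_h=2W_2(h)\prod_{\substack{p\equiv 3 \ (\mathrm{mod}\ 4)\\ p\mid h}}\frac{1-p^{-(m_p(h)+1)}}{1-p^{-1}},$$ and let $\beta=\frac{1}{\sqrt2}\prod_{p\equiv 3\ (\mathrm{mod}\ 4)}(1-p^{-2})^{-1/2}$ (the Landau–Ramanujan constant). Then for every $\varepsilon>0$, as $H\to\infty$, $$\sum_{\substack{1\le d_1,d_2\le H\\ d_1\neq d_2}}\mathscr{T}_{|d_2-d_1|}=2\sum_{1\le h\le H-1}(H-h)\,\mathscr{T}_h=\beta^2H^2+O_\varepsilon(H^{1+\varepsilon}).$$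
   Context: Here $p$ ranges over primes. $\mathscr{T}_h$ is the singular series of the Connors–Keating pair-correlation conjecture for integers representable as a sum of two squares. *)

From Stdlib Require Import Reals.
From mathcomp Require Import all_boot.

Open Scope R_scope.

Fixpoint sumR (n : nat) (f : nat -> R) : R :=
  match n with O => 0 | S k => sumR k f + f (S k) end.
Fixpoint prodR (n : nat) (f : nat -> R) : R :=
  match n with O => 1 | S k => prodR k f * f (S k) end.

Definition W2 (h : nat) : R :=
  let m := logn 2 h in
  if (m == 0)%N then / 4 else (2 ^ (m + 1) - 3) / 2 ^ (m + 2).

Definition Tser (h : nat) : R :=
  2 * W2 h *
  prodR h (fun p => if [&& prime p, (p %% 4 == 3)%N & (p %| h)%N]
                    then (1 - / (INR p) ^ (logn p h + 1)) / (1 - / INR p)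
                    else 1).

Definition beta_partial (N : nat) : R :=
  prodR N (fun p => if prime p && (p %% 4 == 3)%N
                    then Rpower (1 - / (INR p) ^ 2) (- (1 / 2))
                    else 1).

Definition pair_sum (H : nat) : R :=
  sumR H (fun d1 => sumR H (fun d2 =>
    if (d1 == d2)%N then 0 else Tser ((d2 - d1) + (d1 - d2))%N)).

Definition weighted_sum (H : nat) : R :=
  2 * sumR (H - 1) (fun h => INR (H - h) * Tser h).

From Stdlib Require Import Reals Lra Lia.
From mathcomp Require Import all_boot zify.
Open Scope R_scope.

(* The first equality is combinatorial: the pair sum counts every
   difference twice, and by summation by parts both sides equal
   2 sum_{k < H} S(k) with S(k) = sum_{h <= k} T_h.  For the asymptotics:
   1. Unique factorisation turns the Euler product in T_h into a divisor sum:
      T_h = 2 W_2(h) sum_{d | h, d in Q} 1/d, where Q is the set of d all of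
      whose prime factors are 3 mod 4 (euler_prod_eq).
   2. The 2-adic weights average to 1/2: sum_{e <= y} 2 W_2(e) = y/2 + O(1).
   3. Swapping sums, S(x) = (x/2) Z2(x) + O(log x), with Z2(x) = sum_{d <= x,
      d in Q} d^-2.
   4. Applying step 1 with s = 2 to h = (N!)^(K+1) shows that the partial Euler
      products P(N) = prod_{p <= N, p = 3 mod 4} (1 - p^-2)^-1 satisfy
      Z2(N) <= P(N) <= Z2(x) + 1/x; as P(N) -> L^2 = 2 beta^2, we get
      Z2(x) <= L^2 <= Z2(x) + 1/x, hence S(k) = (L^2/2) k + O(log k).
   5. Summing over k < H gives the main term beta^2 H^2 with error O(H log H). *)

Lemma Rabs_le_iff x c : Rabs x <= c <-> - c <= x <= c.
Proof. by split; [rewrite /Rabs; case: Rcase_abs; lra | exact: Rabs_le]. Qed.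

(** * Finite sums and products indexed by 1..n *)

Lemma sumR_ext n f g : (forall i, (0 < i <= n)%N -> f i = g i) -> sumR n f = sumR n g.
Proof.
elim: n => [|n IH] Hfg //=.
by rewrite IH => [|i Hi]; rewrite Hfg //; lia.
Qed.

Lemma prodR_ext n f g : (forall i, (0 < i <= n)%N -> f i = g i) -> prodR n f = prodR n g.
Proof.
elim: n => [|n IH] Hfg //=.
by rewrite IH => [|i Hi]; rewrite Hfg //; lia.
Qed.
Arguments sumR_ext {n f g}.
Arguments prodR_ext {n f g}.

Lemma sumR_S n f : sumR n.+1 f = sumR n f + f n.+1.
Proof. by []. Qed.

Lemma prodR_S n f : prodR n.+1 f = prodR n f * f n.+1.
Proof. by []. Qed.

Lemma sumR_plus n f g : sumR n (fun i => f i + g i) = sumR n f + sumR n g.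
Proof. elim: n => [|n IH] /=; [lra | rewrite IH; lra]. Qed.

Lemma sumR_minus n f g : sumR n (fun i => f i - g i) = sumR n f - sumR n g.
Proof. elim: n => [|n IH] /=; [lra | rewrite IH; lra]. Qed.

Lemma sumR_scal n c f : sumR n (fun i => c * f i) = c * sumR n f.
Proof. elim: n => [|n IH] /=; [lra | rewrite IH; lra]. Qed.

Lemma sumR_0 n : sumR n (fun _ => 0) = 0.
Proof. elim: n => [|n IH] /=; lra. Qed.

Lemma sumR_const n c : sumR n (fun _ => c) = INR n * c.
Proof. elim: n => [|n IH]; rewrite ?sumR_S ?IH ?S_INR /=; lra. Qed.

Lemma sumR_INR n : sumR n INR = INR n * (INR n + 1) / 2.
Proof. elim: n => [|n IH]; rewrite ?sumR_S ?IH ?S_INR /=; field. Qed.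

Lemma sumR_le n f g : (forall i, (0 < i <= n)%N -> f i <= g i) -> sumR n f <= sumR n g.
Proof.
elim: n => [|n IH] Hfg /=; first lra.
have := IH (fun i Hi => Hfg i ltac:(lia)); have := Hfg n.+1 ltac:(lia); lra.
Qed.

Lemma sumR_abs n f : Rabs (sumR n f) <= sumR n (fun i => Rabs (f i)).
Proof.
elim: n => [|n IH] /=; first by rewrite Rabs_R0; lra.
have := Rabs_triang (sumR n f) (f n.+1); lra.
Qed.

Lemma sumR_trunc m n f : (m <= n)%N -> (forall i, (m < i <= n)%N -> f i = 0) ->
  sumR n f = sumR m f.
Proof.
elim: n => [|n IH] Hmn Hf; first by have -> : m = 0%N by lia.
have [->//|Hne] := eqVneq m n.+1.
have Hlast : f n.+1 = 0 by apply: Hf; lia.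
rewrite /= Hlast IH; [lra | lia | by move=> i Hi; apply: Hf; lia].
Qed.

Lemma sumR_mono m n f : (m <= n)%N -> (forall i, (m < i <= n)%N -> 0 <= f i) ->
  sumR m f <= sumR n f.
Proof.
elim: n => [|n IH] Hmn Hf.
  have -> : m = 0%N by lia.
  exact: Rle_refl.
have [->|Hne] := eqVneq m n.+1; first lra.
have := IH ltac:(lia) (fun i Hi => Hf i ltac:(lia)); have := Hf n.+1 ltac:(lia).
rewrite sumR_S; lra.
Qed.

Lemma sumR_swap n m (f : nat -> nat -> R) :
  sumR n (fun i => sumR m (fun j => f i j)) = sumR m (fun j => sumR n (fun i => f i j)).
Proof. elim: n => [|n IH] /=; [by rewrite sumR_0 | by rewrite IH -sumR_plus]. Qed.

Lemma sumR_point n q c :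
  sumR n (fun i => if i == q then c else 0) = if (0 < q <= n)%N then c else 0.
Proof.
elim: n => [|n IH] /=; first by case: ifP => //; lia.
rewrite IH; have [<-|Hne] := eqVneq n.+1 q.
  by rewrite ifF ?ifT; [lra|lia|lia].
by do 2 case: ifP => ?; (lra || lia).
Qed.

Lemma sumR_shift n f : sumR n.+1 f = f 1%N + sumR n (fun d => f d.+1).
Proof.
elim: n => [|n IH]; first by rewrite /=; lra.
by rewrite sumR_S IH sumR_S; lra.
Qed.

Lemma sumR_rev n f : sumR n (fun d => f (n.+1 - d)%N) = sumR n f.
Proof.
elim: n => [|n IH] //.
rewrite sumR_shift sumR_S -{}IH subn1.
rewrite (sumR_ext (g := fun d => f (n.+1 - d)%N)) => [|i Hi]; last (congr f; lia).
by rewrite Rplus_comm.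
Qed.

Lemma sumR_multiples X k G : (0 < k)%N ->
  sumR X (fun d => if (k %| d)%N then G (d %/ k)%N else 0) = sumR (X %/ k) G.
Proof.
move=> Hk; elim: X => [|X IH] /=; first by rewrite div0n.
rewrite IH; case: ifP => Hd.
  have [[|q] Hq] := dvdnP Hd; first by rewrite mul0n in Hq.
  have EX : (X = q * k + k.-1)%N by rewrite mulSn in Hq; lia.
  rewrite Hq mulnK // {1}EX divnMDl // divn_small ?addn0 //; lia.
have -> : (X.+1 %/ k = X %/ k)%N; last lra.
have HXk := divn_eq X k; have Hr := ltn_pmod X Hk.
have Hr1 : (X %% k).+1 != k.
  apply: contraFneq Hd => Er; apply/dvdnP; exists (X %/ k).+1; lia.
have -> : X.+1 = (X %/ k * k + (X %% k).+1)%N by rewrite addnS -HXk.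
by rewrite divnMDl // [(X %% k).+1 %/ k]divn_small ?addn0 // ltn_neqAle Hr1.
Qed.

Lemma prodR_mult n f g : prodR n (fun i => f i * g i) = prodR n f * prodR n g.
Proof. elim: n => [|n IH] /=; [lra | rewrite IH; lra]. Qed.

Lemma prodR_one n : prodR n (fun _ => 1) = 1.
Proof. elim: n => [|n IH] /=; lra. Qed.

Lemma prodR_const n c : prodR n (fun _ => c) = c ^ n.
Proof. elim: n => [|n IH] /=; [lra | rewrite IH; lra]. Qed.

Lemma prodR_sq n f : prodR n (fun i => f i ^ 2) = prodR n f ^ 2.
Proof. elim: n => [|n IH] /=; [lra | rewrite IH; ring]. Qed.

Lemma prodR_trunc m n f : (m <= n)%N -> (forall i, (m < i <= n)%N -> f i = 1) ->
  prodR n f = prodR m f.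
Proof.
elim: n => [|n IH] Hmn Hf; first by have -> : m = 0%N by lia.
have [->//|Hne] := eqVneq m n.+1.
have Hlast : f n.+1 = 1 by apply: Hf; lia.
rewrite /= Hlast IH; [lra | lia | by move=> i Hi; apply: Hf; lia].
Qed.

Lemma prodR_point n q c : (0 < q <= n)%N ->
  prodR n (fun i => if i == q then c else 1) = c.
Proof.
elim: n => [|n IH] Hq; first lia.
rewrite prodR_S; have [Eq|Hne] := eqVneq n.+1 q.
- rewrite -Eq (@prodR_trunc 0) => [/=|//|i Hi]; first lra.
  by rewrite ifF //; apply/eqP; lia.
- by rewrite IH; [lra|lia].
Qed.

Lemma prodR_nonneg n f : (forall i, (0 < i <= n)%N -> 0 <= f i) -> 0 <= prodR n f.
Proof.
elim: n => [|n IH] Hf /=; first lra.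
apply: Rmult_le_pos; [apply: IH => i Hi|]; apply: Hf; lia.
Qed.

Lemma prodR_le n f g : (forall i, (0 < i <= n)%N -> 0 <= f i <= g i) ->
  prodR n f <= prodR n g.
Proof.
elim: n => [|n IH] Hfg /=; first lra.
have H1 := IH (fun i Hi => Hfg i ltac:(lia)); have H2 := Hfg n.+1 ltac:(lia).
have H3 : 0 <= prodR n f by apply: prodR_nonneg => i Hi; have := Hfg i ltac:(lia); lra.
apply: Rmult_le_compat; lra.
Qed.

(** * The Euler product over the primes p = 3 (mod 4) dividing h *)

Definition only3mod4 (d : nat) : bool := all (fun p => p %% 4 == 3)%N (primes d).

Definition invpow (s d : nat) : R := (/ INR d) ^ s.

Definition geo (r : R) (m : nat) : R := sumR m.+1 (fun i => r ^ (i - 1)).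

Definition euler_factor (s h p : nat) : R :=
  if [&& prime p, (p %% 4 == 3)%N & (p %| h)%N] then geo (invpow s p) (logn p h) else 1.

Definition euler_prod (s h : nat) : R := prodR h (euler_factor s h).

Definition divisor_term (s h d : nat) : R :=
  if (d %| h)%N && only3mod4 d then invpow s d else 0.

Definition divisor_sum (s h : nat) : R := sumR h (divisor_term s h).

Lemma INR_expn a b : INR (a ^ b) = INR a ^ b.
Proof. by elim: b => [|b IH]; rewrite ?expn0 // expnS mult_INR IH. Qed.

Lemma invpowM s a b : (0 < a)%N -> (0 < b)%N -> invpow s (a * b) = invpow s a * invpow s b.
Proof. by move=> Ha Hb; rewrite /invpow mult_INR Rinv_mult Rpow_mult_distr. Qed.

Lemma invpowX s a j : invpow s (a ^ j) = invpow s a ^ j.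
Proof. by rewrite /invpow INR_expn -pow_inv -!pow_mult Nat.mul_comm. Qed.

Lemma invpow1 s : invpow s 1 = 1.
Proof. by rewrite /invpow /= Rinv_1 pow1. Qed.

Lemma invpow_ge0 s d : 0 <= invpow s d.
Proof.
apply: pow_le; case: d => [|d]; first by rewrite /= Rinv_0; lra.
by apply/Rlt_le/Rinv_0_lt_compat/(lt_INR 0); lia.
Qed.

Lemma only3mod4M a b : (0 < a)%N -> (0 < b)%N ->
  only3mod4 (a * b) = only3mod4 a && only3mod4 b.
Proof.
move=> Ha Hb; rewrite /only3mod4; apply/allP/andP => [Hab|[/allP Ha3 /allP Hb3]].
  by split; apply/allP => p Hp; apply: Hab; rewrite primesM // Hp ?orbT.
by move=> p; rewrite primesM // => /orP[/Ha3|/Hb3].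
Qed.

Lemma only3mod4X q j : prime q -> (q %% 4 == 3)%N -> only3mod4 (q ^ j).
Proof.
move=> Hq Hq3; case: j => [|j]; first by rewrite expn0.
by rewrite /only3mod4 primesX // primes_prime //= Hq3.
Qed.

Lemma only3mod4_prime_dvd d p : only3mod4 d -> (0 < d)%N -> prime p -> (p %| d)%N ->
  (p %% 4 == 3)%N.
Proof. by move=> /allP Hd Hd0 Hp Hpd; apply: Hd; rewrite mem_primes Hp Hd0 Hpd. Qed.

Lemma euler_prod_trivial s h : ~~ has (fun p => p %% 4 == 3)%N (primes h) ->
  euler_prod s h = 1.
Proof.
move=> /hasPn Hno; rewrite /euler_prod -(prodR_one h); apply: prodR_ext => p Hp.
rewrite /euler_factor; case: (boolP (prime p)) => //= Hpr.
case: (boolP (p %| h)%N) => Hph; rewrite ?andbF //.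
by rewrite (negbTE (Hno p _)) // mem_primes Hpr Hph; lia.
Qed.

Lemma divisor_sum_trivial s h : (0 < h)%N -> ~~ has (fun p => p %% 4 == 3)%N (primes h) ->
  divisor_sum s h = 1.
Proof.
move=> Hh /hasPn Hno; rewrite /divisor_sum /divisor_term.
rewrite (sumR_ext (g := fun d => if d == 1%N then 1 else 0)).
  by rewrite sumR_point ifT //; lia.
move=> d Hd; have [->|Hd1] := eqVneq d 1%N; first by rewrite dvd1n /= invpow1.
case: (boolP ((d %| h)%N && only3mod4 d)) => // /andP[Hdh HQ].
have Hpd := pdiv_prime (ltac:(lia) : (1 < d)%N).
have := @only3mod4_prime_dvd d _ HQ (ltac:(lia)) Hpd (pdiv_dvd d).
by rewrite (negbTE (Hno _ _)) // mem_primes Hpd Hh (dvdn_trans (pdiv_dvd d) Hdh).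
Qed.

Section SplitPrime.
(* Split off the full power q^m of a prime q = 3 (mod 4) from h = h' q^m. *)
Variables (s q m h' : nat).
Hypotheses (Hq : prime q) (Hq3 : (q %% 4 == 3)%N) (Hcop : coprime q h').
Hypotheses (Hh' : (0 < h')%N).

Let Hq0 : (0 < q)%N. Proof. exact: prime_gt0. Qed.

Let Hh : (0 < h' * q ^ m)%N. Proof. by rewrite muln_gt0 Hh' expn_gt0 Hq0. Qed.

Let logn_h : logn q (h' * q ^ m) = m.
Proof. by rewrite logn_Gauss // lognX logn_prime // eqxx muln1. Qed.

Lemma euler_prod_split : (0 < m)%N ->
  euler_prod s (h' * q ^ m) = geo (invpow s q) m * euler_prod s h'.
Proof.
move=> Hm; set h := (h' * q ^ m)%N.
have Hqh : (q %| h)%N by rewrite dvdn_mull // dvdn_exp.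
have Hqle : (0 < q <= h)%N by rewrite Hq0 dvdn_leq.
rewrite /euler_prod -(@prodR_point h q (geo (invpow s q) m) Hqle).
rewrite -(@prodR_trunc h' h (euler_factor s h')); first last.
- move=> i Hi; rewrite /euler_factor; case: (boolP (i %| h')%N) => Hih; rewrite ?andbF //.
  by have := dvdn_leq Hh' Hih; lia.
- by rewrite /h -{1}(muln1 h') leq_mul2l expn_gt0 Hq0 orbT.
rewrite -prodR_mult; apply: prodR_ext => p Hp.
have [->|Hpq] := eqVneq p q.
  have Hqh' : (q %| h') = false by apply/negbTE; rewrite -prime_coprime.
  by rewrite /euler_factor Hq Hq3 Hqh Hqh' /h logn_h /=; lra.
rewrite Rmult_1_l /euler_factor; case: (boolP (prime p)) => //= Hpr.
have Hcop_pq : coprime p (q ^ m) by apply: coprimeXr; rewrite prime_coprime // dvdn_prime2.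
by rewrite /h Gauss_dvdl // lognM // ?expn_gt0 ?Hq0 // (logn_coprime Hcop_pq) addn0.
Qed.

(* The divisors of h' q^m of q-adic valuation j <= m are the e q^j with e | h'. *)
Lemma divisor_sum_layer j : (j <= m)%N ->
  sumR (h' * q ^ m) (fun d => if logn q d == j then divisor_term s (h' * q ^ m) d else 0)
  = invpow s q ^ j * divisor_sum s h'.
Proof.
move=> Hjm; set h := (h' * q ^ m)%N.
have Hqj : (0 < q ^ j)%N by rewrite expn_gt0 Hq0.
set G := fun e => invpow s q ^ j * divisor_term s h' e.
rewrite (sumR_ext (g := fun d => if (q ^ j %| d)%N then G (d %/ q ^ j)%N else 0)).
  rewrite sumR_multiples // sumR_scal /divisor_sum (@sumR_trunc h') //.
    by rewrite /h -(subnK Hjm) expnD mulnA mulnK // leq_pmulr // expn_gt0 Hq0.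
  move=> e He; rewrite /divisor_term; case: (boolP (e %| h')%N) => //= Heh.
  by have := dvdn_leq Hh' Heh; lia.
move=> d Hd; case: (boolP (q ^ j %| d)%N) => Hqd; last first.
  by case: eqP => // Hlog; case/negP: Hqd; rewrite pfactor_dvdn //; lia.
have [e Ed] := dvdnP Hqd; have He : (0 < e)%N by move: Hd; rewrite Ed; case: e {Ed}.
rewrite /G Ed mulnK // lognM // pfactorK // /divisor_term.
rewrite only3mod4M // only3mod4X // andbT invpowM // invpowX.
case: (boolP (e %| h')%N) => Heh /=.
  have -> : logn q e = 0%N by apply: logn_coprime; exact: coprime_dvdr Heh Hcop.
  by rewrite add0n eqxx dvdn_mul // ?dvdn_exp2l //=; case: only3mod4; lra.
case: ifP => [/eqP Hlog|_]; last lra.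
have Hcop_e : coprime e (q ^ m).
  apply: coprimeXr; rewrite coprime_sym prime_coprime // -(expn1 q) pfactor_dvdn //; lia.
case: (boolP (e * q ^ j %| h)%N) => Hd' /=; last lra.
case/negP: Heh; rewrite -(Gauss_dvdl _ Hcop_e).
exact: dvdn_trans (dvdn_mulr _ (dvdnn e)) Hd'.
Qed.

(* Sorting the divisors by their q-adic valuation factors out the geometric sum. *)
Lemma divisor_sum_split :
  divisor_sum s (h' * q ^ m) = geo (invpow s q) m * divisor_sum s h'.
Proof.
set h := (h' * q ^ m)%N; rewrite /divisor_sum.
rewrite (sumR_ext (g := fun d => sumR m.+1
          (fun i => if logn q d == (i - 1)%N then divisor_term s h d else 0))).
  rewrite sumR_swap /geo Rmult_comm -sumR_scal; apply: sumR_ext => i Hi.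
  by rewrite divisor_sum_layer; [apply: Rmult_comm|lia].
move=> d Hd; rewrite (sumR_ext (g := fun i => if i == (logn q d).+1
                                            then divisor_term s h d else 0)).
  rewrite sumR_point; case: ifP => // Hlog; rewrite /divisor_term.
  case: (boolP (d %| h)%N) => //= Hdh.
  by have := dvdn_leq_log q Hh Hdh; rewrite /h logn_h; lia.
by move=> i Hi; have -> : (logn q d == (i - 1)%N) = (i == (logn q d).+1) by lia.
Qed.
End SplitPrime.

Theorem euler_prod_eq s h : (0 < h)%N -> euler_prod s h = divisor_sum s h.
Proof.
elim/ltn_ind: h => h IH Hh.
case: (boolP (has (fun p => p %% 4 == 3)%N (primes h))) => [/hasP[q Hqh Hq3]|Hno];
  last by rewrite euler_prod_trivial // divisor_sum_trivial.
have Hq : prime q by move: Hqh; rewrite mem_primes => /andP[].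
have [h' Hcop Eh] := pfactor_coprime Hq Hh.
have Hm : (0 < logn q h)%N by rewrite logn_gt0.
have Hh' : (0 < h')%N by move: Hh; rewrite Eh muln_gt0 => /andP[].
have Hlt : (h' < h)%N.
  by rewrite [X in (_ < X)%N]Eh -{1}(muln1 h') ltn_mul2l Hh' -(expn0 q) ltn_exp2l // prime_gt1.
by rewrite Eh euler_prod_split // divisor_sum_split // IH.
Qed.

(** * The 2-adic factor: the partial sums of 2 W_2 are y/2 + O(1) *)

Definition a2 (e : nat) : R := 2 * W2 e.
Definition v2 (e : nat) : R := / 2 ^ (logn 2 e).
Definition V2 (y : nat) : R := sumR y v2.
Definition A2 (y : nat) : R := sumR y a2.

Lemma logn2_odd j : logn 2 (2 * j).+1 = 0%N.
Proof. by apply: logn_coprime; rewrite prime_coprime //; apply/negP; lia. Qed.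

Lemma logn2_double n : (0 < n)%N -> logn 2 (2 * n) = (logn 2 n).+1.
Proof. by move=> Hn; rewrite lognM // logn_prime. Qed.

Lemma v2_odd j : v2 (2 * j).+1 = 1.
Proof. by rewrite /v2 logn2_odd /= Rinv_1. Qed.

Lemma v2_double n : (0 < n)%N -> v2 (2 * n) = v2 n / 2.
Proof. by move=> Hn; rewrite /v2 logn2_double //= Rinv_mult; lra. Qed.

Lemma a2_odd j : a2 (2 * j).+1 = / 2.
Proof. rewrite /a2 /W2 logn2_odd /=; lra. Qed.

Lemma a2_even n : (0 < logn 2 n)%N -> a2 n = 1 - 3 / 2 * v2 n.
Proof.
move=> Hn; rewrite /a2 /W2 /v2 ifF; last lia.
have H2 : 0 < 2 ^ logn 2 n by apply: pow_lt; lra.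
rewrite !pow_add /=; field; lra.
Qed.

Lemma V2_double j : V2 (2 * j) = INR j + V2 j / 2.
Proof.
elim: j => [|j IH]; first by rewrite /V2 /=; lra.
have E : (2 * j.+1 = (2 * j).+2)%N by lia.
rewrite /V2 E !sumR_S -/(V2 (2 * j)) IH -/(V2 j) -E v2_odd v2_double // S_INR; lra.
Qed.

Lemma V2_bound y : Rabs (V2 y - 2 * INR y / 3) <= 2 / 3.
Proof.
elim/ltn_ind: y => y IH; apply/Rabs_le_iff.
have [j [Ey|Ey]] : exists j, y = (2 * j)%N \/ y = (2 * j).+1 by exists (y %/ 2)%N; lia.
all: subst y.
- case: (posnP j) => [->|Hj]; first by rewrite /V2 /=; lra.
  move/Rabs_le_iff: (IH j ltac:(lia)) => HV.
  rewrite V2_double mult_INR /=; lra.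
- move/Rabs_le_iff: (IH j ltac:(lia)) => HV.
  rewrite /V2 sumR_S -/(V2 (2 * j)) v2_odd V2_double S_INR mult_INR /=; lra.
Qed.

Lemma A2_double j : A2 (2 * j) = 3 / 2 * INR j - 3 / 4 * V2 j.
Proof.
elim: j => [|j IH]; first by rewrite /A2 /V2 /=; lra.
have E : (2 * j.+1 = (2 * j).+2)%N by lia.
rewrite /A2 E !sumR_S -/(A2 (2 * j)) IH /V2 sumR_S -/(V2 j) -E.
by rewrite a2_odd a2_even ?logn2_double // v2_double // S_INR; lra.
Qed.

Lemma A2_bound y : Rabs (A2 y - INR y / 2) <= / 2.
Proof.
have [j [Ey|Ey]] : exists j, y = (2 * j)%N \/ y = (2 * j).+1 by exists (y %/ 2)%N; lia.
all: subst y; apply/Rabs_le_iff; move/Rabs_le_iff: (V2_bound j) => HV.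
- rewrite A2_double mult_INR /=; lra.
- rewrite /A2 sumR_S -/(A2 (2 * j)) a2_odd A2_double S_INR mult_INR /=; lra.
Qed.

(** * Partial sums of T: sum_{h <= x} T_h = (x/2) Z2(x) + O(log x) *)

Lemma geo_closed r m : r <> 1 -> geo r m = (1 - r ^ m.+1) / (1 - r).
Proof.
move=> Hr; have Hr' : 1 - r <> 0 by lra.
elim: m => [|m IH]; first by rewrite /geo /=; field.
rewrite /geo sumR_S -/(geo r m) IH subn1 /=; field; exact: Hr'.
Qed.

Lemma Tser_divisor_sum h : (0 < h)%N -> Tser h = a2 h * divisor_sum 1 h.
Proof.
move=> Hh; rewrite -euler_prod_eq // /Tser /a2 /euler_prod; congr (_ * _).
apply: prodR_ext => p _; rewrite /euler_factor.
case: (boolP [&& prime p, (p %% 4 == 3)%N & (p %| h)%N]) => // /and3P[Hp _ _].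
have HpR : 1 < INR p by apply: (lt_INR 1); have := prime_gt1 Hp; lia.
have Hr1 : / INR p <> 1 by move=> E; have := Rinv_inv (INR p); rewrite E Rinv_1; lra.
by rewrite geo_closed /invpow pow_1 ?addn1 ?pow_inv.
Qed.

(* Z2(x) = sum_{d <= x, d in Q} d^-2, a partial sum of the Euler product for beta^2. *)
Definition Z2 (x : nat) : R := sumR x (fun d => if only3mod4 d then invpow 2 d else 0).

Definition Harm (x : nat) : R := sumR x (fun d => / INR d).

(* 2 W_2 only sees the 2-part, and elements of Q are odd. *)
Lemma a2_mul_only3mod4 d e : only3mod4 d -> (0 < d)%N -> (0 < e)%N -> a2 (e * d) = a2 e.
Proof.
move=> HQ Hd He; have Hodd : logn 2 d = 0%N.
  apply: logn_coprime; rewrite prime_coprime //; apply/negP => H2.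
  by have := @only3mod4_prime_dvd d 2 HQ Hd isT H2.
by rewrite /a2 /W2 lognM // Hodd addn0.
Qed.

(* Expanding T_h as a divisor sum and swapping the sums. *)
Lemma Tsum_expand x :
  sumR x Tser = sumR x (fun d => if only3mod4 d then invpow 1 d * A2 (x %/ d) else 0).
Proof.
rewrite (sumR_ext (g := fun h => sumR x (fun d =>
           if (d %| h)%N && only3mod4 d then a2 h * invpow 1 d else 0))); last first.
  move=> h Hh; rewrite Tser_divisor_sum ?(andP Hh).1 // /divisor_sum -sumR_scal.
  rewrite (@sumR_trunc h x); first last.
  - move=> d Hd; case: (boolP (d %| h)%N) => Hdh /=; last lra.
    by have := dvdn_leq (ltac:(lia) : (0 < h)%N) Hdh; lia.
  - lia.
  - by apply: sumR_ext => d Hd; rewrite /divisor_term; case: ifP => _; lra.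
rewrite sumR_swap; apply: sumR_ext => d Hd.
case: (boolP (only3mod4 d)) => HQ; last first.
  by rewrite (sumR_ext (g := fun _ => 0)) ?sumR_0 // => h _; rewrite andbF.
set G := fun e => invpow 1 d * a2 e.
rewrite -sumR_scal -(@sumR_multiples x d G) ?(andP Hd).1 //; apply: sumR_ext => h Hh.
rewrite andbT /G; case: (boolP (d %| h)%N) => Hdh //.
rewrite Rmult_comm -{1}(divnK Hdh) a2_mul_only3mod4 // ?(andP Hd).1 //.
by rewrite divn_gt0 ?(andP Hd).1 // dvdn_leq ?(andP Hh).1.
Qed.

Lemma floor_bounds x d : (0 < d)%N ->
  INR x / INR d - 1 < INR (x %/ d) <= INR x / INR d.
Proof.
move=> Hd; have HdR : 0 < INR d by apply: (lt_INR 0); lia.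
have Hr : INR (x %% d) < INR d by apply: lt_INR; have := ltn_pmod x Hd; lia.
have Ex : INR x = INR (x %/ d) * INR d + INR (x %% d).
  by rewrite {1}(divn_eq x d) plus_INR mult_INR.
have := pos_INR (x %% d); rewrite Ex; split.
- apply: (Rmult_lt_reg_r (INR d)) => //; rewrite Rmult_minus_distr_r /Rdiv.
  by rewrite Rmult_assoc Rinv_l; lra.
- apply: (Rmult_le_reg_r (INR d)) => //; rewrite /Rdiv Rmult_assoc Rinv_l; lra.
Qed.

(* Each d in Q contributes an error O(1/d): A2(y) = y/2 + O(1) and x/d = floor(x/d) + O(1). *)
Lemma Tsum_approx x : Rabs (sumR x Tser - INR x / 2 * Z2 x) <= Harm x.
Proof.
rewrite Tsum_expand /Z2 -sumR_scal -sumR_minus.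
apply: Rle_trans (sumR_abs _ _) _; apply: sumR_le => d Hd.
have HdR : 0 < INR d by apply: (lt_INR 0); lia.
have Hinv : 0 < / INR d by apply: Rinv_0_lt_compat.
case: (only3mod4 d); last by rewrite Rmult_0_r Rminus_0_r Rabs_R0; lra.
have -> : invpow 1 d * A2 (x %/ d) - INR x / 2 * invpow 2 d
   = / INR d * ((A2 (x %/ d) - INR (x %/ d) / 2) + (INR (x %/ d) - INR x / INR d) / 2).
  by rewrite /invpow /=; field; lra.
rewrite Rabs_mult Rabs_right; last lra.
rewrite -[X in _ <= X]Rmult_1_r; apply: Rmult_le_compat_l; first lra.
move/Rabs_le_iff: (A2_bound (x %/ d)) => HA.
have Hfl := @floor_bounds x d ltac:(lia).
apply/Rabs_le_iff; lra.
Qed.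

(** * The constant: Z2(x) <= L^2 <= Z2(x) + 1/x, where L^2 = prod (1 - p^-2)^-1 *)

Definition Pfactor (p : nat) : R :=
  if prime p && (p %% 4 == 3)%N then / (1 - / INR p ^ 2) else 1.

Definition Pprod (N : nat) : R := prodR N Pfactor.

Lemma pow_le1 r n : 0 <= r <= 1 -> r ^ n <= 1.
Proof. by move=> Hr; rewrite -(pow1 n); apply: pow_incr. Qed.

Lemma pow_antimono r n m : 0 <= r <= 1 -> (n <= m)%N -> r ^ m <= r ^ n.
Proof.
move=> Hr Hnm; rewrite -(subnK Hnm) pow_add.
have := pow_le r n ltac:(lra); have := pow_le1 r (m - n) Hr; nra.
Qed.

Lemma bernoulli r n : 0 <= r <= 1 -> 1 - INR n * r <= (1 - r) ^ n.
Proof.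
move=> Hr; elim: n => [|n IH]; first by rewrite /=; lra.
rewrite S_INR /=; have := pos_INR n; have := pow_le (1 - r) n ltac:(lra); nra.
Qed.

Lemma geo_bounds r m : 0 <= r < 1 -> 1 <= geo r m <= / (1 - r).
Proof.
move=> Hr; rewrite geo_closed; last lra.
have H1 : 0 < 1 - r by lra.
have Hp : 0 <= r ^ m.+1 by apply: pow_le; lra.
have Hp1 : r ^ m.+1 <= r by rewrite -{2}(pow_1 r); apply: pow_antimono; [lra|].
split; first by apply: (Rmult_le_reg_r (1 - r)); rewrite // /Rdiv Rmult_assoc Rinv_l; lra.
by rewrite /Rdiv; have := Rinv_0_lt_compat _ H1; nra.
Qed.

Lemma inv_ge1 y : 0 < y <= 1 -> 1 <= / y.
Proof. by move=> Hy; rewrite -Rinv_1; apply: Rinv_le_contravar; lra. Qed.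

Lemma prime_inv_sq {p : nat} : prime p -> 0 < / INR p ^ 2 <= / 4 /\ invpow 2 p = / INR p ^ 2.
Proof.
move=> Hp; have H2 : 2 <= INR p by apply: (le_INR 2); have := prime_gt1 Hp; lia.
split; last by rewrite /invpow pow_inv.
split; first by apply/Rinv_0_lt_compat/pow_lt; lra.
by apply: Rinv_le_contravar; rewrite /=; nra.
Qed.

Lemma Pfactor_ge1 p : 1 <= Pfactor p.
Proof.
rewrite /Pfactor; case: ifP => [/andP[Hp _]|_]; last lra.
by have [[H1 H2] _] := prime_inv_sq Hp; apply: inv_ge1; lra.
Qed.

Lemma Pprod_nonneg N : 0 <= Pprod N.
Proof. by apply: prodR_nonneg => p _; have := Pfactor_ge1 p; lra. Qed.

Lemma beta_partial_sq N : beta_partial N ^ 2 = Pprod N.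
Proof.
rewrite /beta_partial -prodR_sq; apply: prodR_ext => p _; rewrite /Pfactor.
case: ifP => [/andP[Hp _]|_]; last by rewrite /=; lra.
have [[H1 H2] _] := prime_inv_sq Hp.
set y := 1 - / INR p ^ 2; have Hy : 0 < y by rewrite /y; lra.
rewrite /= Rmult_1_r -Rpower_plus.
have -> : - (1 / 2) + - (1 / 2) = - 1 by field.
by rewrite Rpower_Ropp Rpower_1.
Qed.

Lemma prime_dvd_fact {p N} : prime p -> (p %| N`!)%N -> (p <= N)%N.
Proof.
move=> Hp; elim: N => [|N IH]; first by rewrite fact0 dvdn1 => /eqP Ep; move: Hp; rewrite Ep.
rewrite factS Euclid_dvdM // => /orP[Hd|/IH]; last lia.
by have := dvdn_leq (ltn0Sn N) Hd.
Qed.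

Lemma euler_prod_fact s N K :
  euler_prod s (N`! ^ K.+1) = prodR N (euler_factor s (N`! ^ K.+1)).
Proof.
rewrite /euler_prod; apply: prodR_trunc => [|p Hp].
  by apply: leq_trans (fact_geq N) _; rewrite -{1}(expn1 N`!) leq_pexp2l // fact_gt0.
case: (boolP (prime p)) => Hpr; last by rewrite /euler_factor (negbTE Hpr).
rewrite /euler_factor Euclid_dvdX // andbT.
by case: (boolP (p %| N`!)%N) => [/(prime_dvd_fact Hpr)|]; rewrite ?andbF //; lia.
Qed.

(* Lower bound: Z2(N) is a partial sum of the full divisor sum of N!. *)
Lemma Z2_le_Pprod N : Z2 N <= Pprod N.
Proof.
apply: (@Rle_trans _ (divisor_sum 2 (N`! ^ 1))).
  rewrite /divisor_sum expn1; apply: Rle_trans (@sumR_mono N N`! (divisor_term 2 N`!) (fact_geq N) _).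
    by apply: Req_le; apply: sumR_ext => d Hd; rewrite /divisor_term dvdn_fact //; lia.
  by move=> d _; rewrite /divisor_term; case: ifP => _; [apply: invpow_ge0|lra].
rewrite -euler_prod_eq ?expn_gt0 ?fact_gt0 // euler_prod_fact /Pprod.
apply: prodR_le => p _; rewrite /euler_factor /Pfactor.
case: (boolP (prime p)) => Hpr; rewrite ?andTb ?andFb; last lra.
have [[H1 H2] Hw] := prime_inv_sq Hpr.
case: (p %% 4 == 3)%N; rewrite ?andTb ?andFb; last lra.
case: ifP => _; last by split; [lra|apply: inv_ge1; lra].
by rewrite Hw; have := geo_bounds (/ INR p ^ 2) (logn p (N`! ^ 1)) ltac:(lra); lra.
Qed.

Lemma Z2_mono {x y} : (x <= y)%N -> Z2 x <= Z2 y.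
Proof. by move=> Hxy; apply: sumR_mono => // d _; case: ifP => _; [apply: invpow_ge0|lra]. Qed.

(* Tail bound: sum_{d > x} d^-2 <= 1/x, by telescoping 1/n^2 <= 1/(n-1) - 1/n. *)
Lemma Z2_tail x y : (0 < x)%N -> Z2 y <= Z2 x + / INR x.
Proof.
move=> Hx.
have HxR : 0 < INR x by apply: (lt_INR 0); lia.
have [Hyx|Hxy] := leqP y x.
  have := Z2_mono Hyx; have := Rinv_0_lt_compat _ HxR; lra.
suff Htel : forall k, Z2 (x + k) <= Z2 x + / INR x - / INR (x + k).
  have := Htel (y - x)%N; rewrite subnKC; last exact: ltnW.
  have : 0 < / INR y by apply/Rinv_0_lt_compat/(lt_INR 0); lia.
  lra.
elim => [|k IH]; first by rewrite addn0; lra.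
have Hk : 0 < INR (x + k) by apply: (lt_INR 0); lia.
rewrite addnS /Z2 sumR_S -/(Z2 (x + k)) -/(Z2 x) S_INR.
have Hterm : (if only3mod4 (x + k).+1 then invpow 2 (x + k).+1 else 0)
             <= / (INR (x + k) + 1) ^ 2.
  case: ifP => _; last by apply/Rlt_le/Rinv_0_lt_compat/pow_lt; lra.
  by rewrite /invpow S_INR pow_inv; lra.
have Hsplit : / (INR (x + k) + 1) ^ 2 = / INR (x + k) - / (INR (x + k) + 1)
                                       - / (INR (x + k) * (INR (x + k) + 1) ^ 2).
  by field; lra.
have : 0 < / (INR (x + k) * (INR (x + k) + 1) ^ 2).
  by apply/Rinv_0_lt_compat/Rmult_lt_0_compat => //; apply: pow_lt; lra.
lra.
Qed.

(* For h = (N!)^(K+1) every p <= N, p = 3 mod 4 divides h to order >= K+1, so the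
   truncated geometric sums approximate (1 - p^-2)^-1 up to a factor 1 - 2^-(K+1). *)
Lemma Pprod_le_euler_prod N K :
  Pprod N * (1 - INR N * (/ 2) ^ K.+1) <= euler_prod 2 (N`! ^ K.+1).
Proof.
set h := (N`! ^ K.+1)%N; set rho := (/ 2) ^ K.+1.
have Hrho : 0 <= rho <= 1 by split; [apply: pow_le | apply: pow_le1]; lra.
apply: (@Rle_trans _ ((1 - rho) ^ N * Pprod N)).
  by have := @bernoulli rho N Hrho; have := Pprod_nonneg N; nra.
rewrite euler_prod_fact -prodR_const /Pprod -prodR_mult; apply: prodR_le => p Hp.
rewrite /Pfactor /euler_factor.
case: (boolP (prime p)) => Hpr; rewrite ?andTb ?andFb; last lra.
have [[H1 H2] Hw] := prime_inv_sq Hpr.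
case: (p %% 4 == 3)%N; rewrite ?andTb ?andFb; last lra.
have Hph : (p %| h)%N by rewrite /h Euclid_dvdX // andbT dvdn_fact //; lia.
rewrite -/h Hph Hw; set r := / INR p ^ 2 in H1 H2 *.
have Hm : (K.+1 <= logn p h)%N.
  rewrite /h lognX; have : (0 < logn p N`!)%N.
    by rewrite logn_gt0 mem_primes Hpr fact_gt0 dvdn_fact //; lia.
  nia.
have Hi := Rinv_0_lt_compat (1 - r) ltac:(lra).
have Hrm : r ^ (logn p h).+1 <= rho.
  apply: (@Rle_trans _ (r ^ K.+1)); first by apply: pow_antimono; [lra|lia].
  by apply: pow_incr; lra.
split; first by apply: Rmult_le_pos; lra.
rewrite geo_closed /Rdiv; [nra|lra].
Qed.

Lemma le_of_geometric_defect a b c : (forall K, a - c * (/ 2) ^ K.+1 <= b) -> a <= b.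
Proof.
move=> Hab; apply: Rnot_lt_le => Hba.
have Hc : 0 < Rabs c + 1 by have := Rabs_pos c; lra.
have [K HK] := pow_lt_1_zero (/ 2) ltac:(rewrite Rabs_right; lra)
                 ((a - b) / (Rabs c + 1)) ltac:(apply: Rdiv_lt_0_compat; lra).
have Ht : 0 <= (/ 2) ^ K.+1 by apply: pow_le; lra.
have Hsmall : (Rabs c + 1) * (/ 2) ^ K.+1 < a - b.
  have := HK K.+1 ltac:(lia); rewrite Rabs_right; last lra.
  move=> Hlt; have := Rmult_lt_compat_l _ _ _ Hc Hlt.
  by have -> : (Rabs c + 1) * ((a - b) / (Rabs c + 1)) = a - b by field; lra.
have := Hab K; have := Rle_abs c; nra.
Qed.

Lemma Pprod_le_Z2 N x : (0 < x)%N -> Pprod N <= Z2 x + / INR x.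
Proof.
move=> Hx; apply: (@le_of_geometric_defect _ _ (INR N * Pprod N)) => K.
set h := (N`! ^ K.+1)%N.
have Hh : (0 < h)%N by rewrite /h expn_gt0 fact_gt0.
have := Pprod_le_euler_prod N K; rewrite -/h euler_prod_eq // => Hlow.
apply: (@Rle_trans _ (Z2 h)); last exact: Z2_tail.
apply: (@Rle_trans _ (divisor_sum 2 h)); first lra.
apply: sumR_le => d _; rewrite /divisor_term.
by case: (d %| h)%N => /=; [lra | case: ifP => _; [apply: invpow_ge0 | lra]].
Qed.

Section Limit.
Variable L : R.
Hypothesis HL : Un_cv beta_partial L.

Lemma Pprod_cv : Un_cv Pprod (L ^ 2).
Proof.
have -> : L ^ 2 = L * L by ring.
apply: (Un_cv_ext (fun n => beta_partial n * beta_partial n)); last exact: CV_mult.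
by move=> n; rewrite -beta_partial_sq /=; ring.
Qed.

Lemma Z2_approx_L2 x : (0 < x)%N -> Z2 x <= L ^ 2 <= Z2 x + / INR x.
Proof.
move=> Hx; split.
  apply: (Rle_trans _ _ _ (Z2_le_Pprod x)); apply: (growing_ineq _ _ _ Pprod_cv) => n.
  rewrite /Pprod prodR_S -/(Pprod n).
  by have := Pfactor_ge1 n.+1; have := Pprod_nonneg n; nra.
apply: Rnot_lt_le => Hlt.
have [N HN] := Pprod_cv (L ^ 2 - (Z2 x + / INR x)) ltac:(lra).
have HP := @Pprod_le_Z2 N x Hx.
move: (HN N (le_n N)); rewrite /Rdist => /Rabs_def2 HN'; lra.
Qed.
End Limit.

(** * Logarithmic estimates *)

Lemma ln_le_sub1 y : 0 < y -> ln y <= y - 1.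
Proof. by move=> Hy; have := exp_ineq1_le (ln y); rewrite exp_ln //; lra. Qed.

Lemma ln_mono a b : 0 < a -> a <= b -> ln a <= ln b.
Proof.
move=> Ha [Hab|<-]; last lra.
by apply/Rlt_le/ln_increasing.
Qed.

(* H_x = sum_{d <= x} 1/d <= 1 + ln x, since 1/(x+1) <= ln (x+1) - ln x. *)
Lemma Harm_bound {x} : (0 < x)%N -> Harm x <= 1 + ln (INR x).
Proof.
elim: x => [|x IH] Hx //; case: (posnP x) => [->|Hx0].
  by rewrite /Harm /= ln_1; lra.
have HxR : 0 < INR x by apply: (lt_INR 0); lia.
rewrite /Harm sumR_S -/(Harm x) S_INR.
have Hstep : / (INR x + 1) <= ln (INR x + 1) - ln (INR x).
  have := ln_le_sub1 (INR x / (INR x + 1)) ltac:(apply: Rdiv_lt_0_compat; lra).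
  rewrite /Rdiv ln_mult ?ln_Rinv; [|lra|lra|apply: Rinv_0_lt_compat; lra].
  have -> : INR x * / (INR x + 1) - 1 = - / (INR x + 1) by field; lra.
  lra.
have := IH Hx0; lra.
Qed.

Lemma ln_le_Rpower {X eps} : 1 <= X -> 0 < eps -> ln X <= Rpower X eps / eps /\ 1 <= Rpower X eps.
Proof.
move=> HX He; have Hl : 0 <= ln X by rewrite -ln_1; apply: ln_mono; lra.
rewrite /Rpower; have := exp_ineq1_le (eps * ln X) => Hexp.
split; last nra.
apply: (Rmult_le_reg_l eps) => //.
have -> : eps * (exp (eps * ln X) / eps) = exp (eps * ln X) by field; lra.
lra.
Qed.

(** * Combinatorial rewriting of the pair sum *)

(* The pair sum counts each difference h = |d2 - d1| twice, and
   sum_{h <= n} (n + 1 - h) T_h = sum_{k <= n} sum_{h <= k} T_h. *)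
Lemma pair_sum_partial n : pair_sum n.+1 = 2 * sumR n (fun k => sumR k Tser).
Proof.
rewrite /pair_sum; elim: n => [|n IH]; first by rewrite /=; lra.
set g := fun d1 d2 : nat => if d1 == d2 then 0 else Tser (d2 - d1 + (d1 - d2))%N.
have IH' : sumR n.+1 (fun d1 => sumR n.+1 (g d1)) = 2 * sumR n (fun k => sumR k Tser) := IH.
rewrite (sumR_ext (g := fun d1 => sumR n.+1 (g d1) + g d1 n.+2)) => [|d1 _]; last by [].
rewrite sumR_plus [sumR n.+2 (fun d1 => sumR n.+1 (g d1))]sumR_S IH'.
rewrite [sumR n.+2 (fun d1 => g d1 n.+2)]sumR_S [sumR n.+1 (fun k => sumR k Tser)]sumR_S.
have -> : g n.+2 n.+2 = 0 by rewrite /g eqxx.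
have Erow : sumR n.+1 (g n.+2) = sumR n.+1 Tser.
  rewrite -sumR_rev; apply: sumR_ext => d Hd; rewrite /g ifF; [congr Tser|apply/eqP]; lia.
have Ecol : sumR n.+1 (fun d1 => g d1 n.+2) = sumR n.+1 Tser.
  rewrite -sumR_rev; apply: sumR_ext => d Hd; rewrite /g ifF; [congr Tser|apply/eqP]; lia.
rewrite Erow Ecol; lra.
Qed.

Lemma sumR_by_parts n (T : nat -> R) :
  sumR n (fun h => INR (n.+1 - h) * T h) = sumR n (fun k => sumR k T).
Proof.
elim: n => [|n IH] //.
rewrite (sumR_ext (g := fun h => INR (n.+1 - h) * T h + T h)) => [|h Hh]; last first.
  by rewrite subSn ?S_INR; [ring | lia].
by rewrite sumR_plus sumR_S IH [RHS]sumR_S subnn /=; lra.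
Qed.

Lemma weighted_sum_partial n : weighted_sum n.+1 = 2 * sumR n (fun k => sumR k Tser).
Proof. by rewrite /weighted_sum subn1 /= sumR_by_parts. Qed.

(** * The asymptotic formula *)

Section Asymptotics.
Variable L : R.
Hypothesis HL : Un_cv beta_partial L.

Lemma Tsum_asymptotic k : (0 < k)%N ->
  Rabs (sumR k Tser - L ^ 2 / 2 * INR k) <= 3 / 2 + ln (INR k).
Proof.
move=> Hk; have HkR : 0 < INR k by apply: (lt_INR 0); lia.
have Happrox := Tsum_approx k; have Hharm := Harm_bound Hk.
have [Zlow Zup] := Z2_approx_L2 L HL k Hk.
have Hconst : Rabs (INR k / 2 * Z2 k - L ^ 2 / 2 * INR k) <= / 2.
  apply/Rabs_le_iff; have Hk1 : INR k * / INR k = 1 by field; lra.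
  split; nra.
have := Rabs_triang (sumR k Tser - INR k / 2 * Z2 k) (INR k / 2 * Z2 k - L ^ 2 / 2 * INR k).
have -> : sumR k Tser - INR k / 2 * Z2 k + (INR k / 2 * Z2 k - L ^ 2 / 2 * INR k)
        = sumR k Tser - L ^ 2 / 2 * INR k by ring.
lra.
Qed.

Lemma weighted_sum_error n : let X := INR n.+1 in
  Rabs (weighted_sum n.+1 - L ^ 2 / 2 * X ^ 2) <= X * (L ^ 2 / 2 + 3 + 2 * ln X).
Proof.
move=> X.
have HnX : INR n <= X by rewrite /X S_INR; lra.
have Hn0 := pos_INR n.
have HX1 : 1 <= X by rewrite /X S_INR; lra.
have HL2 : 0 <= L ^ 2 by apply: pow2_ge_0.
have Hl0 : 0 <= ln X by rewrite -ln_1; apply: ln_mono; lra.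
set E := sumR n (fun k => sumR k Tser - L ^ 2 / 2 * INR k).
have Hsplit : weighted_sum n.+1 - L ^ 2 / 2 * X ^ 2 = - (L ^ 2 / 2) * X + 2 * E.
  by rewrite weighted_sum_partial /E sumR_minus sumR_scal sumR_INR /X S_INR; field.
have HE : Rabs E <= INR n * (3 / 2 + ln X).
  apply: Rle_trans (sumR_abs _ _) _; rewrite -sumR_const; apply: sumR_le => k Hk.
  have Hk_asym := @Tsum_asymptotic k ltac:(lia).
  have : ln (INR k) <= ln X by apply: ln_mono; [apply: (lt_INR 0)|apply: le_INR]; lia.
  lra.
rewrite Hsplit; apply: Rle_trans (Rabs_triang _ _) _.
rewrite !Rabs_mult Rabs_Ropp !(Rabs_pos_eq (L ^ 2 / 2)) ?(Rabs_pos_eq X) ?(Rabs_pos_eq 2); try lra.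
nra.
Qed.
End Asymptotics.

(* The main theorem: the pair sum equals the weighted sum, and the weighted sum
   is beta^2 H^2 + O(H^(1+eps)) because beta^2 = L^2 / 2 and log H = O(H^eps). *)
Theorem theorem1 (L : R) (HL : Un_cv beta_partial L) :
  let beta := / sqrt 2 * L in
  (forall H : nat, pair_sum H = weighted_sum H) /\
  (forall eps : R, 0 < eps ->
     exists C : R, exists N : nat, forall H : nat, (N <= H)%nat ->
       Rabs (weighted_sum H - beta ^ 2 * (INR H) ^ 2)
         <= C * Rpower (INR H) (1 + eps)).
Proof.
move=> beta; split.
  case=> [|n]; first by rewrite /pair_sum /weighted_sum /=; lra.
  by rewrite pair_sum_partial weighted_sum_partial.
move=> eps He; exists (L ^ 2 / 2 + 3 + 2 / eps), 1%N => -[|n] // _.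
have Hbeta : beta ^ 2 = L ^ 2 / 2.
  by rewrite /beta Rpow_mult_distr pow_inv pow2_sqrt; [field|lra].
set X := INR n.+1.
have HX : 1 <= X by rewrite /X S_INR; have := pos_INR n; lra.
have [Hln HRp] := ln_le_Rpower HX He; set Rp := Rpower X eps in Hln HRp *.
have HL2 : 0 <= L ^ 2 by apply: pow2_ge_0.
have Hinner : L ^ 2 / 2 + 3 + 2 * ln X <= (L ^ 2 / 2 + 3 + 2 / eps) * Rp.
  have : 2 * ln X <= 2 / eps * Rp by move: Hln; rewrite /Rdiv; lra.
  nra.
rewrite Hbeta Rpower_plus Rpower_1 -/Rp; last lra.
apply: Rle_trans (weighted_sum_error L HL n) _.
rewrite -/X; have := Rmult_le_compat_l X _ _ ltac:(lra) Hinner; lra.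
Qed.
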